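(* Let $a_2,a_3$ be integers with $1<a_2<a_3$, $A=\{1,a_2,a_3\}$, and let $SG(A,n,p)$ be a stride generator. Then no thread (with respect to $n$) of order $i\le p$ is covered by any other thread.
   Context: For integers $n$ and $i\ge 0$, an integer $x$ has an $n$-generation of order $i$ if there are integers $c_1,c_2\ge 0$ with $x+ia_3=c_2a_2+c_1$ and $c_1+c_2\le n+i$. For integers $n$ and $p\ge0$, $SG(A,n,p)$ is a stride generator if: (A) every integer $0\le x<a_3$ has an $n$-generation of some order $\le p$; (B) at least one integer $0\le x<a_3$ has no $n$-generation of order $<p$; (C) at least one integer $0\le y<a_3$ has no $(n-1)$-generation of any order $\le p+1$. Threads: for integers $e\ge 0$, $i\ge0$ with $n+i-e\ge 0$, the thread $T(e,i)$ is the integer interval $[c,d]$ with $c=ea_2-ia_3$, $d=c+(n+i)-e$, of order $i$. Only such intervals meeting $[0,a_3)$ are regarded as threads. A thread $[c_1,d_1]$ covers a thread $[c_2,d_2]$ if $c_1\le c_2$ and $d_1\ge d_2$. *)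

From Stdlib Require Import ZArith Lia.
Open Scope Z_scope.

Definition has_gen (a2 a3 n i x : Z) : Prop :=
  0 <= i /\
  exists c1 c2 : Z, 0 <= c1 /\ 0 <= c2 /\
    x + i * a3 = c2 * a2 + c1 /\ c1 + c2 <= n + i.

Definition stride_generator (a2 a3 n p : Z) : Prop :=
  0 <= p /\
  (forall x, 0 <= x < a3 -> exists i, 0 <= i <= p /\ has_gen a2 a3 n i x) /\
  (exists x, 0 <= x < a3 /\ forall i, 0 <= i < p -> ~ has_gen a2 a3 n i x) /\
  (exists y, 0 <= y < a3 /\ forall i, 0 <= i <= p + 1 -> ~ has_gen a2 a3 (n - 1) i y).

(* endpoints of the interval T(e,i) = [c, d] *)
Definition thread_c (a2 a3 e i : Z) : Z := e * a2 - i * a3.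
Definition thread_d (a2 a3 n e i : Z) : Z := thread_c a2 a3 e i + (n + i) - e.

Definition is_thread (a2 a3 n e i : Z) : Prop :=
  0 <= e /\ 0 <= i /\ 0 <= n + i - e /\
  exists x, thread_c a2 a3 e i <= x <= thread_d a2 a3 n e i /\ 0 <= x < a3.

Definition covers (a2 a3 n e1 i1 e2 i2 : Z) : Prop :=
  thread_c a2 a3 e1 i1 <= thread_c a2 a3 e2 i2 /\
  thread_d a2 a3 n e2 i2 <= thread_d a2 a3 n e1 i1.

(* If T(e',i') covered T(e,i), then with u = i - i' and v = e - e' the two
   endpoint inequalities say 0 <= v a2 - u a3 <= v - u, which forces
   0 <= u <= v and, the threads being distinct, u >= 1.  Trading v copies of
   a2 for u copies of a3 then turns every n-generation of order m >= u into
   one of order m - u.  Applied to a point of [0, a3) whose generations all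
   have order p (condition (B)), this yields a generation of order p - u < p. *)
From Stdlib Require Import ZArith Lia.
Open Scope Z_scope.

Definition order_drop (a2 a3 u v : Z) : Prop :=
  0 <= v * a2 - u * a3 <= v - u.

Lemma covers_order_drop (a2 a3 n e i e' i' : Z) :
  covers a2 a3 n e' i' e i -> order_drop a2 a3 (i - i') (e - e').
Proof.
  unfold covers, order_drop, thread_d, thread_c; lia.
Qed.

Lemma order_drop_bounds (a2 a3 u v : Z) :
  1 < a2 < a3 -> order_drop a2 a3 u v -> 0 <= u <= v.
Proof.
  unfold order_drop; intros Ha Hd; nia.
Qed.

Lemma order_drop_trivial (a2 a3 v : Z) :
  1 < a2 -> order_drop a2 a3 0 v -> v = 0.
Proof.
  unfold order_drop; intros Ha Hd; nia.
Qed.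

Lemma has_gen_order_drop (a2 a3 n m u v x : Z) :
  1 < a2 -> 0 <= a3 -> order_drop a2 a3 u v -> u <= m -> 0 <= x ->
  has_gen a2 a3 n m x -> has_gen a2 a3 n (m - u) x.
Proof.
  unfold order_drop; intros Ha2 Ha3 [HD HDu] Hum Hx [_ [c1 [c2 [Hc1 [Hc2 [Heq Hs]]]]]].
  split; [lia|].
  destruct (Z_le_gt_dec v c2) as [Hvc | Hvc].
  - exists (c1 + (v * a2 - u * a3)), (c2 - v); repeat split; nia.
  - (* too few copies of a2 to trade: then the target is already at most n + m - u *)
    exists (x + (m - u) * a3), 0; repeat split; nia.
Qed.

Lemma stride_generator_exact_order (a2 a3 n p : Z) :
  stride_generator a2 a3 n p ->
  exists x, 0 <= x < a3 /\ has_gen a2 a3 n p x /\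
            forall i, 0 <= i < p -> ~ has_gen a2 a3 n i x.
Proof.
  intros [_ [HA [[x [Hx Hlow]] _]]].
  destruct (HA x Hx) as [m [Hm Hg]].
  assert (Hmp : m = p).
  { destruct (Z.eq_dec m p) as [|Hmp]; [auto|].
    exfalso; apply (Hlow m); [lia | exact Hg]. }
  subst m; exists x; auto.
Qed.

Theorem lemma6 (a2 a3 n p : Z) :
  1 < a2 < a3 ->
  stride_generator a2 a3 n p ->
  forall e i e' i' : Z,
    is_thread a2 a3 n e i -> i <= p ->
    is_thread a2 a3 n e' i' -> (e', i') <> (e, i) ->
    ~ covers a2 a3 n e' i' e i.
Proof.
  intros Ha Hsg e i e' i' [_ [Hi _]] Hip [_ [Hi' _]] Hne Hcov.
  pose proof (covers_order_drop _ _ _ _ _ _ _ Hcov) as Hdrop.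
  pose proof (order_drop_bounds _ _ _ _ Ha Hdrop) as Huv.
  assert (Hu : 1 <= i - i').
  { destruct (Z.eq_dec (i - i') 0) as [Hu0|]; [|lia].
    rewrite Hu0 in Hdrop.
    pose proof (order_drop_trivial _ _ _ (proj1 Ha) Hdrop).
    exfalso; apply Hne; f_equal; lia. }
  destruct (stride_generator_exact_order _ _ _ _ Hsg) as [x [Hx [Hgp Hlow]]].
  apply (Hlow (p - (i - i'))); [lia|].
  apply (has_gen_order_drop a2 a3 n p (i - i') (e - e') x); auto; lia.
Qed.
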